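(* Let $h\in R$. Then for every $i\ge0$, the binary representation of $h$ does not end with the string $1(10)^i$.
   Context: Stern's sequence $(a(n))_{n\ge0}$: $a(0)=0$, $a(1)=1$, $a(2n)=a(n)$, $a(2n+1)=a(n)+a(n+1)$; $s(n)=a(n+1)$ for $n\ge0$. $R$ is the set of record-setters of $s$, i.e. indices $v\ge0$ with $s(i)<s(v)$ for all $i<v$. The binary representation of a positive integer has no leading zeros; $0$ is represented by the string $0$. $x^i$ denotes $i$-fold concatenation of the string $x$ ($x^0$ empty). *)

From mathcomp Require Import all_boot.
Set Implicit Arguments. Unset Strict Implicit. Unset Printing Implicit Defensive.

(* Stern's diatomic sequence a(n) computed with fuel: a(0)=0, a(1)=1,
   a(2n)=a(n), a(2n+1)=a(n)+a(n+1).  [stern_fuel k n] is correct whenever n <= k. *)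
Fixpoint stern_fuel (k n : nat) : nat :=
  match k with
  | 0 => 0
  | k'.+1 =>
    if n <= 1 then n
    else if odd n then stern_fuel k' n./2 + stern_fuel k' n./2.+1
    else stern_fuel k' n./2
  end.

Definition stern (n : nat) : nat := stern_fuel n n.

Definition s (n : nat) : nat := stern n.+1.

Definition record_setter (v : nat) : Prop := forall i, i < v -> s i < s v.

(* binary representation, most significant bit first, no leading zeros;
   0 is represented by the string "0" (i.e. [:: false]) *)
Fixpoint bin_pos (k n : nat) : seq bool :=
  match k with
  | 0 => [::]
  | k'.+1 => if n == 0 then [::] else rcons (bin_pos k' n./2) (odd n)
  end.

Definition bin (n : nat) : seq bool :=
  if n == 0 then [:: false] else bin_pos n n.

Definition spow (x : seq bool) (i : nat) : seq bool := flatten (nseq i x).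

Definition pat (i : nat) : seq bool := true :: spow [:: true; false] i.

Lemma stern_check :
  [seq stern n | n <- iota 0 17] =
  [:: 0; 1; 1; 2; 1; 3; 2; 3; 1; 4; 3; 5; 2; 5; 3; 4; 1].
Proof. by []. Qed.

Lemma bin_check : bin 0 = [:: false] /\ bin 6 = [:: true; true; false]
  /\ bin 13 = [:: true; true; false; true].
Proof. by []. Qed.

Lemma suffix_check : suffix (pat 1) (bin 6) /\ ~~ suffix (pat 1) (bin 13).
Proof. by []. Qed.

From mathcomp Require Import all_boot zify.

(* Write h = t 1 (10)^i in binary and let g = t (10)^i 1 < h.  Appending the
   bits 10 to n maps the pair (a(n), a(n+1)) linearly to
   (a(n) + a(n+1), a(n) + 2 a(n+1)), so a(g+1) and a(h+1) are both linear in
   (a(t), a(t+1)) with coefficients given by the i-th power of that map, and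
   comparing them gives s(h) <= s(g): h is not a record-setter. *)

Lemma stern_fuel_agree k1 k2 n :
  n <= k1 -> n <= k2 -> stern_fuel k1 n = stern_fuel k2 n.
Proof.
elim: k1 k2 n => [|k1 IH] [|k2] n //= H1 H2; try by have -> : n = 0 by lia.
case: ifP => // Hn; have hd := odd_double_half n.
by case: (odd n) hd => /= hd; rewrite ?(IH k2) //; lia.
Qed.

Lemma stern_fuelE k n : n <= k -> stern_fuel k n = stern n.
Proof. by move=> Hn; apply: stern_fuel_agree. Qed.

Lemma stern_rec n : 1 < n ->
  stern n = if odd n then stern n./2 + stern n./2.+1 else stern n./2.
Proof.
case: n => [|k] // Hk; rewrite {1}/stern /= ifN -?ltnNge //.
have hd := odd_double_half k.
by case: (odd k) hd => /= hd; rewrite !stern_fuelE //; lia.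
Qed.

Lemma stern_double n : stern n.*2 = stern n.
Proof. by case: n => [|n] //; rewrite stern_rec ?odd_double ?doubleK // doubleS. Qed.

Lemma stern_doubleS n : stern n.*2.+1 = stern n + stern n.+1.
Proof.
by case: n => [|n] //; rewrite stern_rec /= ?odd_double ?uphalf_double // doubleS.
Qed.

Definition app10 (n : nat) : nat := 4 * n + 2.

Lemma stern_app10 n :
  stern (app10 n) = stern n + stern n.+1 /\
  stern (app10 n).+1 = stern n + 2 * stern n.+1.
Proof.
have -> : app10 n = (n.*2.+1).*2 by rewrite /app10; lia.
by rewrite stern_double !stern_doubleS -doubleS stern_double; split; lia.
Qed.

Lemma stern_iter_app10 i : exists a b, forall n,
  stern (iter i app10 n) = a * stern n + b * stern n.+1 /\
  stern (iter i app10 n).+1 = b * stern n + (a + b) * stern n.+1.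
Proof.
elim: i => [|i [a [b IH]]]; first by exists 1, 0 => /= n; lia.
exists (a + b), (a + 2 * b) => n; have [E1 E2] := IH n.
by rewrite iterS; have [-> ->] := stern_app10 (iter i app10 n); rewrite E1 E2; lia.
Qed.

Lemma iter_app10_double_lt i x : (iter i app10 x).*2 < iter i app10 x.*2.+1.
Proof. by elim: i => [|i IH] //=; move: IH; rewrite /app10; lia. Qed.

Lemma s_iter_app10_le i x : s (iter i app10 x.*2.+1) <= s (iter i app10 x).*2.
Proof.
have [a [b E]] := stern_iter_app10 i; rewrite /s stern_doubleS.
have [E1 E2] := E x; have [_ E3] := E x.*2.+1.
(* with u = a(x), v = a(x+1): the sides are b u + (a+2b) v and (a+b) u + (a+2b) v *)
by rewrite E1 E2 E3 stern_doubleS -doubleS stern_double; lia.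
Qed.

Definition push_bit (a : nat) (b : bool) : nat := a.*2 + b.

Definition nat_of_bits : seq bool -> nat := foldl push_bit 0.

Lemma nat_of_bits_bin_pos k n : n <= k -> nat_of_bits (bin_pos k n) = n.
Proof.
elim: k n => [|k IH] n Hn /=; first by move: Hn; rewrite leqn0 => /eqP ->.
have [->|Hn0] := eqVneq n 0; first by [].
rewrite /nat_of_bits foldl_rcons -/nat_of_bits IH.
  by rewrite /push_bit addnC odd_double_half.
by have := odd_double_half n; move: Hn0 => /eqP; lia.
Qed.

Lemma nat_of_bits_bin h : nat_of_bits (bin h) = h.
Proof. by rewrite /bin; have [->|_] := eqVneq h 0; last exact: nat_of_bits_bin_pos. Qed.

Lemma foldl_push_bit_spow10 i a :
  foldl push_bit a (spow [:: true; false] i) = iter i app10 a.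
Proof.
elim: i a => [|i IH] a //=; rewrite IH -iterS iterSr.
by congr (iter _ _ _); rewrite /push_bit /app10; lia.
Qed.

Lemma pat_suffix_bin i h : suffix (pat i) (bin h) -> exists x, h = iter i app10 x.*2.+1.
Proof.
case/suffixP => t Ht; exists (nat_of_bits t).
rewrite -{1}(nat_of_bits_bin h) Ht /nat_of_bits foldl_cat /=.
by rewrite foldl_push_bit_spow10 /push_bit addn1.
Qed.

Theorem mainTheorem5 (h : nat) :
  record_setter h -> forall i : nat, ~~ suffix (pat i) (bin h).
Proof.
move=> Hrec i; apply/negP => /pat_suffix_bin [x Hh]; subst h.
have := Hrec _ (iter_app10_double_lt i x).
by rewrite ltnNge s_iter_app10_le.
Qed.
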